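(* Let $N\ge2$ and let $(b,d)\in\mathbb{Z}^2$ be primitive with $N\nmid d$. Then there exists a sequence $v_0,\dots,v_k\in\mathbb{Z}^2$, $v_i=(b_i,d_i)$, with $v_0=(0,1)$, $v_k=(b,d)$, $b_{i}d_{i+1}-b_{i+1}d_{i}=1$ for $0\le i<k$, and $N\nmid d_i$ for all $0\le i\le k$. *)

From Stdlib Require Import ZArith.
Open Scope Z_scope.

Definition primitive (b d : Z) : Prop := Z.gcd b d = 1.

From Stdlib Require Import ZArith Znumtheory Lia Arith.
Open Scope Z_scope.

(* Reachability is extended one step at a time.
   - Base: all (b,1) and (b,-1) are reachable, walking along the rows
     d = 1 and d = -1 (N divides neither 1 nor -1 since N >= 2).
   - Descent: for primitive (b,d) with |d| > 1, Bezout gives a vector (f,e)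
     with det((f,e),(b,d)) = 1 and e strictly between 0 and d; then (f-b,e-d)
     is another such vector.  As N does not divide d, N misses e or e - d, so
     (b,d) is one step away from a primitive vector with smaller |second
     coordinate| that is reachable by strong induction on |d|. *)

Definition det2 (u w : Z * Z) : Z := fst u * snd w - fst w * snd u.

Definition reachable (N : Z) (w : Z * Z) : Prop :=
  exists (k : nat) (v : nat -> Z * Z),
    v 0%nat = (0, 1) /\ v k = w /\
    (forall i : nat, (i < k)%nat -> det2 (v i) (v (S i)) = 1) /\
    (forall i : nat, (i <= k)%nat -> ~ (N | snd (v i))).

Lemma not_divide_unit (N e : Z) : 2 <= N -> e = 1 \/ e = -1 -> ~ (N | e).
Proof.
  intros HN He Hdiv.
  assert (H1 : (N | 1)).
  { destruct He as [-> | ->]; [exact Hdiv | now apply Z.divide_opp_r]. }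
  apply Z.divide_1_r in H1; lia.
Qed.

Lemma reachable_start (N : Z) : 2 <= N -> reachable N (0, 1).
Proof.
  intros HN; exists 0%nat, (fun _ => (0, 1)); repeat split; try (intros; lia).
  intros i _; apply not_divide_unit; auto.
Qed.

Lemma reachable_step (N : Z) (u w : Z * Z) :
  reachable N u -> det2 u w = 1 -> ~ (N | snd w) -> reachable N w.
Proof.
  intros (k & v & H0 & Hk & Hdet & Hn) Huw Hw.
  exists (S k), (fun i => if Nat.eqb i (S k) then w else v i); repeat split.
  - destruct k; exact H0.
  - simpl; now rewrite Nat.eqb_refl.
  - intros i Hi; destruct (Nat.eqb_spec i (S k)) as [|_]; [lia|].
    destruct (Nat.eqb_spec (S i) (S k)).
    + assert (i = k) as -> by lia; rewrite Hk; exact Huw.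
    + apply Hdet; lia.
  - intros i Hi; destruct (Nat.eqb_spec i (S k)); [exact Hw | apply Hn; lia].
Qed.

(* Steps in the rows d = 1 and d = -1: (b,1) -> (b-1,1), and
   (b,1) -> (-b-1,-1) -> (-b,-1) -> (b+1,1). *)
Lemma reachable_row_pred (N b : Z) :
  2 <= N -> reachable N (b, 1) -> reachable N (b - 1, 1).
Proof.
  intros HN H; apply (reachable_step N (b, 1)); auto.
  - unfold det2; cbn [fst snd]; lia.
  - apply not_divide_unit; auto.
Qed.

Lemma reachable_row_succ (N b : Z) :
  2 <= N -> reachable N (b, 1) -> reachable N (b + 1, 1).
Proof.
  intros HN H.
  assert (Hm : ~ (N | -1)) by (apply not_divide_unit; auto).
  assert (H1 : reachable N (- b - 1, -1))
    by (apply (reachable_step N (b, 1)); auto; unfold det2; cbn [fst snd]; lia).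
  assert (H2 : reachable N (- b, -1))
    by (apply (reachable_step N (- b - 1, -1)); auto; unfold det2; cbn [fst snd]; lia).
  apply (reachable_step N (- b, -1)); auto.
  - unfold det2; cbn [fst snd]; lia.
  - apply not_divide_unit; auto.
Qed.

Lemma reachable_row_one (N b : Z) : 2 <= N -> reachable N (b, 1).
Proof.
  intros HN.
  assert (Hnat : forall n : nat,
             reachable N (Z.of_nat n, 1) /\ reachable N (- Z.of_nat n, 1)).
  { induction n as [|n [IHpos IHneg]]; [split; apply reachable_start; auto|].
    split.
    - replace (Z.of_nat (S n)) with (Z.of_nat n + 1) by lia.
      apply reachable_row_succ; auto.
    - replace (- Z.of_nat (S n)) with (- Z.of_nat n - 1) by lia.
      apply reachable_row_pred; auto. }
  destruct (Z_le_gt_dec 0 b).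
  - replace b with (Z.of_nat (Z.to_nat b)) by lia; apply Hnat.
  - replace b with (- Z.of_nat (Z.to_nat (- b))) by lia; apply Hnat.
Qed.

Lemma reachable_row_minus_one (N b : Z) : 2 <= N -> reachable N (b, -1).
Proof.
  intros HN; apply (reachable_step N (- 1 - b, 1)).
  - apply reachable_row_one; auto.
  - unfold det2; cbn [fst snd]; lia.
  - apply not_divide_unit; auto.
Qed.

(* A primitive vector (b,d) with |d| > 1 has a left determinant-one
   neighbour (f,e) whose second coordinate lies strictly between 0 and d:
   reduce a Bezout coefficient modulo d; the remainder is nonzero because
   f*d = 1 is impossible for |d| > 1. *)
Lemma exists_neighbour_between (b d : Z) :
  Z.gcd b d = 1 -> 1 < Z.abs d ->
  exists f e, f * d - b * e = 1 /\
    ((0 < e < d) \/ (d < e < 0)).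
Proof.
  intros Hg Hd.
  destruct (Z.gcd_bezout b d 1 Hg) as [u [v Huv]].
  assert (Hd0 : d <> 0) by lia.
  set (q := (- u) / d); set (r := (- u) mod d).
  assert (Hdm : - u = d * q + r) by (apply Z.div_mod; exact Hd0).
  exists (v - b * q), r; split; [nia|].
  assert (Hr0 : r <> 0).
  { intro Hr; rewrite Hr in Hdm.
    assert (Hunit : d * (v - q * b) = 1) by nia.
    apply Z.eq_mul_1 in Hunit; lia. }
  destruct (Z_lt_le_dec 0 d).
  - left; pose proof (Z.mod_pos_bound (- u) d); lia.
  - right; pose proof (Z.mod_neg_bound (- u) d); lia.
Qed.

Lemma neighbour_primitive (f e b d : Z) : f * d - b * e = 1 -> Z.gcd f e = 1.
Proof.
  intros H; apply Z.bezout_1_gcd; exists d, (- b); lia.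
Qed.

(* Descent step: (b,d) with |d| > 1 has a left neighbour avoiding N with a
   smaller second coordinate; either (f,e) or (f-b,e-d) works, because N
   cannot divide both e and e - d without dividing d. *)
Lemma smaller_neighbour (N b d : Z) :
  Z.gcd b d = 1 -> 1 < Z.abs d -> ~ (N | d) ->
  exists f e, f * d - b * e = 1 /\ Z.abs e < Z.abs d /\ ~ (N | e).
Proof.
  intros Hg Hd HNd.
  destruct (exists_neighbour_between b d Hg Hd) as (f & e & Hdet & Hbetween).
  destruct (Zdivide_dec N e) as [He | He].
  - exists (f - b), (e - d); repeat split; [lia | lia |].
    intro Hed; apply HNd.
    replace d with (e - (e - d)) by ring; now apply Z.divide_sub_r.
  - exists f, e; repeat split; [exact Hdet | lia | exact He].
Qed.

Lemma reachable_primitive (N : Z) : 2 <= N ->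
  forall (n : nat) (b d : Z), Z.abs_nat d = n ->
  Z.gcd b d = 1 -> ~ (N | d) -> reachable N (b, d).
Proof.
  intros HN n; induction n as [n IH] using lt_wf_ind; intros b d Hn Hg HNd.
  assert (Hd0 : d <> 0) by (intros ->; apply HNd, Z.divide_0_r).
  destruct (Z.eq_dec (Z.abs d) 1) as [Hunit | Hbig].
  - destruct (Z.abs_spec d) as [[_ Habs] | [_ Habs]].
    + replace d with 1 by lia; apply reachable_row_one; auto.
    + replace d with (-1) by lia; apply reachable_row_minus_one; auto.
  - destruct (smaller_neighbour N b d Hg ltac:(lia) HNd)
      as (f & e & Hdet & Hsmall & He).
    apply (reachable_step N (f, e)); [| unfold det2; cbn [fst snd]; lia | exact HNd].
    apply (IH (Z.abs_nat e)); auto; [lia |].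
    exact (neighbour_primitive f e b d Hdet).
Qed.

Theorem mainTheorem8 (N b d : Z) (HN : 2 <= N) (Hprim : primitive b d)
  (Hd : ~ (N | d)) :
  exists (k : nat) (v : nat -> Z * Z),
    v 0%nat = (0, 1) /\ v k = (b, d) /\
    (forall i : nat, (i < k)%nat ->
       fst (v i) * snd (v (S i)) - fst (v (S i)) * snd (v i) = 1) /\
    (forall i : nat, (i <= k)%nat -> ~ (N | snd (v i))).
Proof.
  exact (reachable_primitive N HN (Z.abs_nat d) b d eq_refl Hprim Hd).
Qed.
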